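(* Let $\mathscr{A}$ be a closed set of games and $(\mathcal{Q},\mathcal{P})$ a reduced bipartite monoid. The following are equivalent: (i) $(\mathcal{Q},\mathcal{P})\cong\mathcal{Q}(\mathscr{A})$; (ii) there exists a surjective monoid homomorphism $\Phi:\mathscr{A}\to\mathcal{Q}$ (with respect to disjunctive sum on $\mathscr{A}$) such that for every $G\in\mathscr{A}$: $\Phi(G)\in\mathcal{P}$ if and only if $G\neq0$ and $\Phi(G')\notin\mathcal{P}$ for every option $G'$ of $G$.
   Context: Games are finite, loopfree impartial games identified with the finite set of their options ($0=\{\}$); disjunctive sum $G+H=\{G'+H\}\cup\{G+H'\}$, making any set of games closed under $+$ and containing $0$ a commutative monoid. Misère outcome: $o^-(G)=\mathscr{P}$ iff $G\neq0$ and every option has outcome $\mathscr{N}$; otherwise $\mathscr{N}$. A set of games is closed if it contains all options of its members and is closed under $+$. For closed $\mathscr{A}$: $G\equiv_\mathscr{A}H$ iff $o^-(G+X)=o^-(H+X)$ for all $X\in\mathscr{A}$; $\mathcal{Q}(\mathscr{A})$ is the bipartite monoid of $\equiv_\mathscr{A}$-classes ($[G][H]=[G+H]$) with distinguished subset the classes of misère $\mathscr{P}$-positions. A bipartite monoid is a pair (commutative monoid, subset); isomorphism means monoid isomorphism carrying the subset onto the subset. $(\mathcal{Q},\mathcal{P})$ is reduced if for any distinct $x,y\in\mathcal{Q}$ there is $z$ with exactly one of $xz,yz$ in $\mathcal{P}$. *)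

From Stdlib Require Import List ClassicalEpsilon.
Import ListNotations.
Set Implicit Arguments.

(** Games as finite rooted trees; a game is identified with the (finite) set
    of its options, so game identity is hereditary extensional set equality
    [geq] below.  Sets of games / functions on games are modelled as
    [geq]-saturated predicates / [geq]-respecting functions. *)
Inductive game : Type := Node : list game -> game.

Definition opts (G : game) : list game := match G with Node l => l end.

Definition zero : game := Node nil.

Inductive geq : game -> game -> Prop :=
| geq_intro (l1 l2 : list game) :
    (forall a, In a l1 -> exists b, In b l2 /\ geq a b) ->
    (forall b, In b l2 -> exists a, In a l1 /\ geq a b) ->
    geq (Node l1) (Node l2).

(** disjunctive sum: G + H = {G' + H} u {G + H'} *)
Fixpoint gsum (G H : game) {struct G} : game :=
  match G with
  | Node lg =>
      let fix aux (H : game) : game :=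
        match H with
        | Node lh => Node (map (fun g => gsum g H) lg ++ map aux lh)
        end
      in aux H
  end.

(** misère outcome: [ppos G = true] iff o^-(G) = P *)
Fixpoint ppos (G : game) : bool :=
  match G with
  | Node nil => false
  | Node l => forallb (fun g => negb (ppos g)) l
  end.

Definition closed_set (A : game -> Prop) : Prop :=
  (forall G H, geq G H -> A G -> A H) /\
  (forall G G', A G -> In G' (opts G) -> A G') /\
  (forall G H, A G -> A H -> A (gsum G H)).

Definition equivA (A : game -> Prop) (G H : game) : Prop :=
  forall X, A X -> ppos (gsum G X) = ppos (gsum H X).

(** The quotient Q(A): elements are the equivalence classes (as predicates). *)
Definition clsA (A : game -> Prop) (G : game) : game -> Prop :=
  fun H => A H /\ equivA A G H.

Definition is_clsA (A : game -> Prop) (c : game -> Prop) : Prop :=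
  exists G, A G /\ c = clsA A G.

Definition rep (c : game -> Prop) : game :=
  epsilon (inhabits zero) (fun G => c G).

Definition qmul (A : game -> Prop) (c d : game -> Prop) : game -> Prop :=
  clsA A (gsum (rep c) (rep d)).

Definition qone (A : game -> Prop) : game -> Prop := clsA A zero.

Definition qP (c : game -> Prop) : Prop := exists G, c G /\ ppos G = true.

Record bimonoid := BiMonoid {
  bcar : Type;
  bmul : bcar -> bcar -> bcar;
  bone : bcar;
  bmulA : forall x y z, bmul x (bmul y z) = bmul (bmul x y) z;
  bmulC : forall x y, bmul x y = bmul y x;
  bmul1 : forall x, bmul bone x = x;
  bP : bcar -> Prop
}.

Definition reduced (Q : bimonoid) : Prop :=
  forall x y : bcar Q, x <> y ->
    exists z, ~ (bP Q (bmul Q x z) <-> bP Q (bmul Q y z)).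

Definition iso_QA (Q : bimonoid) (A : game -> Prop) : Prop :=
  exists f : bcar Q -> (game -> Prop),
    (forall x, is_clsA A (f x)) /\
    (forall x y, f x = f y -> x = y) /\
    (forall c, is_clsA A c -> exists x, f x = c) /\
    (forall x y, f (bmul Q x y) = qmul A (f x) (f y)) /\
    f (bone Q) = qone A /\
    (forall x, bP Q x <-> qP (f x)).

Definition good_hom (Q : bimonoid) (A : game -> Prop) : Prop :=
  exists Phi : game -> bcar Q,
    (forall G H, A G -> geq G H -> Phi G = Phi H) /\
    Phi zero = bone Q /\
    (forall G H, A G -> A H -> Phi (gsum G H) = bmul Q (Phi G) (Phi H)) /\
    (forall q, exists G, A G /\ Phi G = q) /\
    (forall G, A G ->
       (bP Q (Phi G) <->
        (opts G <> nil /\ forall G', In G' (opts G) -> ~ bP Q (Phi G')))).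

(** Condition (ii) forces [Phi G \in P] to satisfy the same recursion over
    options as the misère outcome, so by induction [Phi G \in P] exactly when
    [G] is a misère P-position.  A homomorphism that detects P-positions sends
    [G] and [H] to the same element iff [G + X] and [H + X] have the same
    outcome for all [X] in the range, i.e. iff [G] and [H] are
    indistinguishable modulo [A] (the "if" half uses that [Q] is reduced and
    [Phi] is onto); hence [Phi] induces an isomorphism [Q(A) ~ Q].
    Conversely, composing the quotient map with the inverse of an isomorphism
    gives a [Phi] satisfying (ii). *)

From Stdlib Require Import List ClassicalEpsilon Classical Bool
  FunctionalExtensionality PropExtensionality.
Import ListNotations.

(** [game] is a nested inductive type, so its automatic induction principle
    has no hypothesis for the options. *)
Definition game_ind' (P : game -> Prop)
  (Hn : forall l, (forall g, In g l -> P g) -> P (Node l)) : forall G, P G :=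
  fix IH (G : game) : P G :=
  match G with Node l => Hn l ((fix aux (l : list game) : forall g, In g l -> P g :=
     match l with
     | nil => fun g Hin => False_ind _ Hin
     | cons a l' => fun g Hin => match Hin with
         | or_introl e => eq_ind a P (IH a) g e
         | or_intror Hin' => aux l' g Hin' end
     end) l) end.

Lemma gsum_node lg lh : gsum (Node lg) (Node lh) =
  Node (map (fun g => gsum g (Node lh)) lg ++ map (fun h => gsum (Node lg) h) lh).
Proof. reflexivity. Qed.

Lemma in_gsum G H x : In x (opts (gsum G H)) <->
  (exists g, In g (opts G) /\ x = gsum g H) \/ (exists h, In h (opts H) /\ x = gsum G h).
Proof.
  destruct G as [lg], H as [lh]. rewrite gsum_node. simpl.
  rewrite in_app_iff, !in_map_iff.
  split; intros [[y [E Hy]]|[y [E Hy]]]; [left|right|left|right]; exists y; auto.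
Qed.

Lemma in_gsum_l G H g : In g (opts G) -> In (gsum g H) (opts (gsum G H)).
Proof. intro Hg. apply in_gsum. left. exists g. auto. Qed.

Lemma in_gsum_r G H h : In h (opts H) -> In (gsum G h) (opts (gsum G H)).
Proof. intro Hh. apply in_gsum. right. exists h. auto. Qed.

Lemma geq_I G H :
  (forall a, In a (opts G) -> exists b, In b (opts H) /\ geq a b) ->
  (forall b, In b (opts H) -> exists a, In a (opts G) /\ geq a b) -> geq G H.
Proof. destruct G, H; simpl; constructor; auto. Qed.

Lemma geq_E G H : geq G H ->
  (forall a, In a (opts G) -> exists b, In b (opts H) /\ geq a b) /\
  (forall b, In b (opts H) -> exists a, In a (opts G) /\ geq a b).
Proof. intro E; destruct E; simpl; auto. Qed.

Lemma ppos_opts G :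
  ppos G = true <-> opts G <> nil /\ forall G', In G' (opts G) -> ppos G' = false.
Proof.
  destruct G as [[|a l]]; simpl.
  - split; [discriminate | intros [H _]; congruence].
  - rewrite andb_true_iff, forallb_forall, negb_true_iff. split.
    + intros [Ha Hl]; split; [discriminate|].
      intros g [<-|Hg]; [|apply negb_true_iff]; auto.
    + intros [_ H]. split; [apply H; left; reflexivity|].
      intros g Hg. apply negb_true_iff, H. right; exact Hg.
Qed.

Lemma ppos_geq : forall G H, geq G H -> ppos G = ppos H.
Proof.
  induction G as [l IH] using game_ind'. intros [l'] E.
  apply geq_E in E as [E1 E2]; simpl in E1, E2.
  apply eq_iff_eq_true. rewrite !ppos_opts; simpl.
  split; intros [Hn Hall]; split.
  - destruct l as [|a l]; [congruence|].
    destruct (E1 a (or_introl eq_refl)) as [b [Hb _]].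
    destruct l'; [destruct Hb|discriminate].
  - intros h Hh. destruct (E2 h Hh) as [g [Hg E]]. rewrite <- (IH g Hg h E). auto.
  - destruct l' as [|a l']; [congruence|].
    destruct (E2 a (or_introl eq_refl)) as [b [Hb _]].
    destruct l; [destruct Hb|discriminate].
  - intros g Hg. destruct (E1 g Hg) as [h [Hh E]]. rewrite (IH g Hg h E). auto.
Qed.

Lemma gsum_comm : forall G H, geq (gsum G H) (gsum H G).
Proof.
  induction G as [lg IHg] using game_ind'. intro H.
  induction H as [lh IHh] using game_ind'.
  apply geq_I.
  - intros a Ha. apply in_gsum in Ha as [[g [Hg ->]]|[h [Hh ->]]].
    + exists (gsum (Node lh) g). split; [apply in_gsum_r|apply IHg]; auto.
    + exists (gsum h (Node lg)). split; [apply in_gsum_l|apply IHh]; auto.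
  - intros b Hb. apply in_gsum in Hb as [[h [Hh ->]]|[g [Hg ->]]].
    + exists (gsum (Node lg) h). split; [apply in_gsum_r|apply IHh]; auto.
    + exists (gsum g (Node lh)). split; [apply in_gsum_l|apply IHg]; auto.
Qed.

Lemma gsum_assoc : forall G H K, geq (gsum (gsum G H) K) (gsum G (gsum H K)).
Proof.
  induction G as [lg IHg] using game_ind'. intro H.
  induction H as [lh IHh] using game_ind'. intro K.
  induction K as [lk IHk] using game_ind'.
  apply geq_I.
  - intros a Ha. apply in_gsum in Ha as [[x [Hx ->]]|[k [Hk ->]]].
    + apply in_gsum in Hx as [[g [Hg ->]]|[h [Hh ->]]].
      * exists (gsum g (gsum (Node lh) (Node lk))).
        split; [apply in_gsum_l|apply IHg]; auto.
      * exists (gsum (Node lg) (gsum h (Node lk))).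
        split; [apply in_gsum_r, in_gsum_l|apply IHh]; auto.
    + exists (gsum (Node lg) (gsum (Node lh) k)).
      split; [apply in_gsum_r, in_gsum_r|apply IHk]; auto.
  - intros b Hb. apply in_gsum in Hb as [[g [Hg ->]]|[y [Hy ->]]].
    + exists (gsum (gsum g (Node lh)) (Node lk)).
      split; [apply in_gsum_l, in_gsum_l|apply IHg]; auto.
    + apply in_gsum in Hy as [[h [Hh ->]]|[k [Hk ->]]].
      * exists (gsum (gsum (Node lg) h) (Node lk)).
        split; [apply in_gsum_l, in_gsum_r|apply IHh]; auto.
      * exists (gsum (gsum (Node lg) (Node lh)) k).
        split; [apply in_gsum_r|apply IHk]; auto.
Qed.

Lemma gsum_geq_l : forall G G', geq G G' -> forall H, geq (gsum G H) (gsum G' H).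
Proof.
  induction G as [lg IHg] using game_ind'. intros G' E H.
  pose proof (geq_E _ _ E) as [E1 E2]; simpl in E1.
  induction H as [lh IHh] using game_ind'.
  apply geq_I.
  - intros a Ha. apply in_gsum in Ha as [[g [Hg ->]]|[h [Hh ->]]].
    + destruct (E1 g Hg) as [g' [Hg' Hgg]].
      exists (gsum g' (Node lh)). split; [apply in_gsum_l|apply IHg]; auto.
    + exists (gsum G' h). split; [apply in_gsum_r|apply IHh]; auto.
  - intros b Hb. apply in_gsum in Hb as [[g' [Hg' ->]]|[h [Hh ->]]].
    + destruct (E2 g' Hg') as [g [Hg Hgg]].
      exists (gsum g (Node lh)). split; [apply in_gsum_l|apply IHg]; auto.
    + exists (gsum (Node lg) h). split; [apply in_gsum_r|apply IHh]; auto.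
Qed.

Lemma gsum_zero : forall G, geq (gsum G zero) G.
Proof.
  induction G as [lg IHg] using game_ind'.
  apply geq_I.
  - intros a Ha. apply in_gsum in Ha as [[g [Hg ->]]|[h [Hh _]]]; [|destruct Hh].
    exists g; auto.
  - intros b Hb. exists (gsum b zero). split; [apply in_gsum_l|]; auto.
Qed.

Lemma ppos_unique (B P : game -> Prop) :
  (forall G G', B G -> In G' (opts G) -> B G') ->
  (forall G, B G -> (P G <-> opts G <> nil /\ forall G', In G' (opts G) -> ~ P G')) ->
  forall G, B G -> (P G <-> ppos G = true).
Proof.
  intros Bopts HP. induction G as [l IH] using game_ind'. intro BG.
  rewrite HP, ppos_opts by exact BG. simpl.
  split; intros [Hn Hall]; split; auto; intros G' HG';
    assert (BG' : B G') by (eapply Bopts; [exact BG|exact HG']).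
  - apply not_true_iff_false. rewrite <- IH by auto. auto.
  - rewrite IH by auto. rewrite Hall; auto; discriminate.
Qed.

Set Implicit Arguments.

Section Quotient.

Variable A : game -> Prop.
Hypothesis HA : closed_set A.

Lemma closed_zero G : A G -> A zero.
Proof.
  destruct HA as [_ [Aopts _]]. induction G as [l IH] using game_ind'. intro AG.
  destruct l as [|a l]; [exact AG|].
  apply (IH a (or_introl eq_refl)), (Aopts _ a AG). left; reflexivity.
Qed.

Lemma equivA_refl G : equivA A G G.
Proof. intros X _. reflexivity. Qed.

Lemma equivA_sym G H : equivA A G H -> equivA A H G.
Proof. intros E X AX. symmetry. auto. Qed.

Lemma equivA_trans G H K : equivA A G H -> equivA A H K -> equivA A G K.
Proof. intros E F X AX. rewrite (E X AX). auto. Qed.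

Lemma geq_equivA G H : geq G H -> equivA A G H.
Proof. intros E X _. apply ppos_geq, gsum_geq_l, E. Qed.

Lemma equivA_ppos G H : A zero -> equivA A G H -> ppos G = ppos H.
Proof.
  intros Az E. specialize (E zero Az).
  rewrite (ppos_geq _ _ (gsum_zero G)), (ppos_geq _ _ (gsum_zero H)) in E.
  exact E.
Qed.

(** Indistinguishability is a congruence for the disjunctive sum: move one
    summand into the test game [X] at a time. *)
Lemma equivA_gsum G H R S : A H -> A R ->
  equivA A G R -> equivA A H S -> equivA A (gsum G H) (gsum R S).
Proof.
  destruct HA as [_ [_ Aadd]]. intros AH AR HGR HHS X AX.
  rewrite (ppos_geq _ _ (gsum_assoc G H X)), (HGR _ (Aadd H X AH AX)).
  rewrite <- (ppos_geq _ _ (gsum_assoc R H X)).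
  rewrite (ppos_geq _ _ (gsum_geq_l _ _ (gsum_comm R H) X)).
  rewrite (ppos_geq _ _ (gsum_assoc H R X)), (HHS _ (Aadd R X AR AX)).
  rewrite <- (ppos_geq _ _ (gsum_assoc S R X)).
  rewrite (ppos_geq _ _ (gsum_geq_l _ _ (gsum_comm S R) X)).
  reflexivity.
Qed.

Lemma clsA_eq G H : equivA A G H -> clsA A G = clsA A H.
Proof.
  intro E. apply functional_extensionality; intro K. apply propositional_extensionality.
  unfold clsA. split; intros [AK EK]; split; auto.
  - exact (equivA_trans (equivA_sym E) EK).
  - exact (equivA_trans E EK).
Qed.

Lemma clsA_inj G H : A H -> clsA A G = clsA A H -> equivA A G H.
Proof.
  intros AH E. assert (HH : clsA A H H) by (split; [exact AH|apply equivA_refl]).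
  rewrite <- E in HH. apply HH.
Qed.

Lemma rep_clsA G : A G -> A (rep (clsA A G)) /\ equivA A G (rep (clsA A G)).
Proof.
  intro AG.
  exact (epsilon_spec (inhabits zero) (clsA A G)
           (ex_intro _ G (conj AG (equivA_refl G)))).
Qed.

Lemma qmul_clsA G H : A G -> A H ->
  qmul A (clsA A G) (clsA A H) = clsA A (gsum G H).
Proof.
  intros AG AH. unfold qmul.
  destruct (rep_clsA AG) as [_ EG], (rep_clsA AH) as [AH' EH].
  apply clsA_eq, equivA_gsum; auto using equivA_sym.
Qed.

Lemma qP_clsA G : A G -> (qP (clsA A G) <-> ppos G = true).
Proof.
  intro AG. split.
  - intros [H [[AH EGH] pH]]. rewrite (equivA_ppos (closed_zero AG) EGH). exact pH.
  - intros pG. exists G. split; [split; [exact AG|apply equivA_refl]|exact pG].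
Qed.

Section FromCondition.

Variable Q : bimonoid.
Hypothesis Qred : reduced Q.
Variable Phi : game -> bcar Q.
Hypothesis Phi_zero : Phi zero = bone Q.
Hypothesis Phi_gsum :
  forall G H, A G -> A H -> Phi (gsum G H) = bmul Q (Phi G) (Phi H).
Hypothesis Phi_surj : forall q, exists G, A G /\ Phi G = q.
Hypothesis Phi_P : forall G, A G ->
  (bP Q (Phi G) <-> (opts G <> nil /\ forall G', In G' (opts G) -> ~ bP Q (Phi G'))).

Lemma Phi_P_ppos G : A G -> (bP Q (Phi G) <-> ppos G = true).
Proof.
  destruct HA as [_ [Aopts _]].
  exact (ppos_unique A (fun G => bP Q (Phi G)) Aopts Phi_P G).
Qed.

Lemma Phi_eq_equivA G H : A G -> A H -> (Phi G = Phi H <-> equivA A G H).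
Proof.
  destruct HA as [_ [_ Aadd]]. intros AG AH. split.
  - intros E X AX. apply eq_iff_eq_true.
    rewrite <- !Phi_P_ppos, !Phi_gsum, E by auto. reflexivity.
  - intros E. apply NNPP. intro Hne.
    destruct (Qred Hne) as [z Hz]. destruct (Phi_surj z) as [X [AX <-]].
    apply Hz. rewrite <- !Phi_gsum, !Phi_P_ppos, (E X AX) by auto. reflexivity.
Qed.

Definition Phi_sec (x : bcar Q) : game :=
  epsilon (inhabits zero) (fun G => A G /\ Phi G = x).

Lemma Phi_secP x : A (Phi_sec x) /\ Phi (Phi_sec x) = x.
Proof. exact (epsilon_spec (inhabits zero) (fun G => A G /\ Phi G = x) (Phi_surj x)). Qed.

Lemma clsA_Phi_sec G : A G -> clsA A (Phi_sec (Phi G)) = clsA A G.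
Proof.
  intro AG. destruct (Phi_secP (Phi G)) as [As Ps].
  apply clsA_eq, Phi_eq_equivA; auto.
Qed.

Lemma iso_QA_of_condition : iso_QA Q A.
Proof.
  exists (fun x => clsA A (Phi_sec x)).
  split; [|split; [|split; [|split; [|split]]]].
  - intros x. exists (Phi_sec x). split; [apply Phi_secP|reflexivity].
  - intros x y E. destruct (Phi_secP x) as [Ax Px], (Phi_secP y) as [Ay Py].
    rewrite <- Px, <- Py. apply Phi_eq_equivA, clsA_inj; auto.
  - intros c [G [AG ->]]. exists (Phi G). apply clsA_Phi_sec, AG.
  - intros x y. destruct (Phi_secP x) as [Ax Px], (Phi_secP y) as [Ay Py].
    destruct HA as [_ [_ Aadd]].
    rewrite qmul_clsA, <- (clsA_Phi_sec (Aadd _ _ Ax Ay)), Phi_gsum, Px, Py by auto.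
    reflexivity.
  - unfold qone. destruct (Phi_secP (bone Q)) as [A1 _].
    rewrite <- (clsA_Phi_sec (closed_zero A1)), Phi_zero. reflexivity.
  - intros x. destruct (Phi_secP x) as [Ax Px].
    rewrite qP_clsA, <- Phi_P_ppos, Px by exact Ax. reflexivity.
Qed.

End FromCondition.

Section ToCondition.

Variable Q : bimonoid.
Variable f : bcar Q -> (game -> Prop).
Hypothesis f_cls : forall x, is_clsA A (f x).
Hypothesis f_inj : forall x y, f x = f y -> x = y.
Hypothesis f_surj : forall c, is_clsA A c -> exists x, f x = c.
Hypothesis f_mul : forall x y, f (bmul Q x y) = qmul A (f x) (f y).
Hypothesis f_one : f (bone Q) = qone A.
Hypothesis f_P : forall x, bP Q x <-> qP (f x).

(** [Phi G] depends on [G] only through its class, which is what makes it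
    respect [geq]. *)
Definition Phi_of_iso (G : game) : bcar Q :=
  epsilon (inhabits (bone Q)) (fun x => f x = clsA A G).

Lemma f_Phi_of_iso G : A G -> f (Phi_of_iso G) = clsA A G.
Proof.
  intro AG. apply (epsilon_spec (inhabits (bone Q)) (fun x => f x = clsA A G)).
  apply f_surj. exists G. auto.
Qed.

Lemma Phi_of_iso_P G : A G -> (bP Q (Phi_of_iso G) <-> ppos G = true).
Proof. intro AG. rewrite f_P, f_Phi_of_iso by exact AG. apply qP_clsA, AG. Qed.

Lemma good_hom_of_iso : good_hom Q A.
Proof.
  destruct HA as [Asat [Aopts Aadd]].
  destruct (f_cls (bone Q)) as [G1 [A1 _]]. pose proof (closed_zero A1) as Az.
  exists Phi_of_iso. split; [|split; [|split; [|split]]].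
  - intros G H AG E. unfold Phi_of_iso. rewrite (clsA_eq (geq_equivA E)). reflexivity.
  - apply f_inj. rewrite f_Phi_of_iso, f_one by exact Az. reflexivity.
  - intros G H AG AH. apply f_inj.
    rewrite f_mul, !f_Phi_of_iso, qmul_clsA by auto. reflexivity.
  - intros q. destruct (f_cls q) as [G [AG Eq]]. exists G. split; [exact AG|].
    apply f_inj. rewrite f_Phi_of_iso, Eq by exact AG. reflexivity.
  - intros G AG. rewrite Phi_of_iso_P, ppos_opts by exact AG.
    split; intros [Hn Hall]; split; auto; intros G' HG';
      assert (AG' : A G') by exact (Aopts _ _ AG HG').
    + rewrite Phi_of_iso_P, Hall by auto. discriminate.
    + apply not_true_iff_false. rewrite <- Phi_of_iso_P by exact AG'. auto.
Qed.

End ToCondition.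

End Quotient.

Theorem mainTheorem15 (A : game -> Prop) (Q : bimonoid) :
  closed_set A -> reduced Q ->
  (iso_QA Q A <-> good_hom Q A).
Proof.
  intros HA Qred. split.
  - intros (f & f_cls & f_inj & f_surj & f_mul & f_one & f_P).
    exact (good_hom_of_iso HA Q f f_cls f_inj f_surj f_mul f_one f_P).
  - intros (Phi & _ & Phi_zero & Phi_gsum & Phi_surj & Phi_P).
    exact (iso_QA_of_condition HA Qred Phi Phi_zero Phi_gsum Phi_surj Phi_P).
Qed.
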